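(* For $N\ge1$ let $\mathbf{m}=N(1,0,\dots,0)^\top\in\mathbb{R}^{N+1}$, $\mathbf{M}=\mathrm{diag}(\mathbf{m})$, and let $\mathbf{Q}_N$ be the tridiagonal matrix with $(\mathbf{Q}_N)_{kk}=-N$, $(\mathbf{Q}_N)_{k+1,k}=N-k$, $(\mathbf{Q}_N)_{k-1,k}=k$ (indices $0,\dots,N$) and zeros elsewhere. Fix $\mu>0$, let $\mathbf{p}=(p_0,\dots,p_N)$ be the positive vector with $\sum_ip_i=1$ satisfying $(\mathbf{M}+\mu\mathbf{Q}_N)\mathbf{p}=\overline{m}\,\mathbf{p}$ with $\overline{m}=\mathbf{m}\cdot\mathbf{p}$, let $\overline{r}=\overline{m}/N$ and $u=\mu/\overline{r}$. Then for every $a\in\{1,\dots,N\}$, $$\left|p_a-\frac{u^a}{(1+u)^{a+1}}\right|\le\frac{u^{a+1}2^a(a+1)}{\sqrt{N}}+\left(1-\frac{\binom{N}{a}a!}{N^a}\right)\frac{u^a}{(1+u)^{a+1}}.$$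
   Context: $\mathbf{p}$ is the normalized Perron eigenvector of $\mathbf{M}+\mu\mathbf{Q}_N$ (Crow–Kimura quasispecies model with single peaked fitness landscape) and $\overline{m}$ is the corresponding dominant eigenvalue. *)

From mathcomp Require Import all_boot all_order all_algebra.
From mathcomp Require Import reals.
Set Implicit Arguments. Unset Strict Implicit. Unset Printing Implicit Defensive.
Import Order.TTheory GRing.Theory Num.Theory.
Local Open Scope ring_scope.

Definition fitvec (R : ringType) (N : nat) : 'cV[R]_(N.+1) :=
  \col_(i < N.+1) (if (i : nat) == 0%N then N%:R else 0).

Definition fitmx (R : ringType) (N : nat) : 'M[R]_(N.+1) :=
  \matrix_(i < N.+1, j < N.+1) (if i == j then fitvec R N i 0 else 0).

Definition QN (R : ringType) (N : nat) : 'M[R]_(N.+1) :=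
  \matrix_(i < N.+1, k < N.+1)
    (if (i : nat) == k then - N%:R
     else if (i : nat) == k.+1 then (N - k)%:R
     else if (i : nat).+1 == k then k%:R
     else 0).

(** The eigen-equation is a three-term recurrence for [p]. Writing [w = 1 + u],
    the flux [(N - i) p_i - (i + 1) p_(i+1)] satisfies
    [u flux_i = N p_(i+1) + u flux_(i+1)] and vanishes at [i = N], so it is
    nonnegative; hence [p_(i+1) <= u p_i] and [p_(i+1) <= u^i].  Dropping, resp.
    bounding, the last term of the recurrence then gives by induction
    [u^a N^_a <= p_a w^(a+1) N^a] and
    [N p_a w^(a+1) - N u^a <= (u w)^(a+1) (a+1)^2], which are the two sides of
    the estimate. *)
From mathcomp Require Import all_boot all_order all_algebra.
From mathcomp Require Import reals.
From mathcomp Require Import ring lra zify.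
Set Implicit Arguments. Unset Strict Implicit. Unset Printing Implicit Defensive.
Import Order.TTheory GRing.Theory Num.Theory.
Local Open Scope ring_scope.

Definition col_nat (R : nzRingType) n (v : 'cV[R]_n.+1) (k : nat) : R :=
  if (k < n.+1)%N then v (inord k) 0 else 0.

Lemma ffact_le_expn n m : (n ^_ m <= n ^ m)%N.
Proof.
elim: m => [|m IHm]; first by rewrite ffactn0 expn0.
by rewrite ffactnSr expnSr leq_mul // leq_subr.
Qed.

Section ColNat.
Variables (R : nzRingType) (n : nat) (v : 'cV[R]_n.+1).

Lemma col_nat_ord (i : 'I_n.+1) : col_nat v i = v i 0.
Proof. by rewrite /col_nat ltn_ord inord_val. Qed.

Lemma col_nat_out k : (n < k)%N -> col_nat v k = 0.
Proof. by move=> nk; rewrite /col_nat ltnNge nk. Qed.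

End ColNat.

Section CrowKimuraMatrices.
Variables (R : nzRingType) (N : nat) (v : 'cV[R]_N.+1).

Lemma fitvec_dot : \sum_(i < N.+1) fitvec R N i 0 * v i 0 = N%:R * col_nat v 0.
Proof.
under eq_bigr => i _ do rewrite mxE -col_nat_ord (fun_if (fun x => x * col_nat v i)) mul0r.
by rewrite -big_mkcond (big_ord1_eq _ (fun i => N%:R * col_nat v i)).
Qed.

Lemma fitmx_mulmx (i : 'I_N.+1) :
  (fitmx R N *m v) i 0 = fitvec R N i 0 * v i 0.
Proof.
rewrite mxE (bigD1 i) //= mxE eqxx big1 ?addr0 // => j /negbTE ji.
by rewrite mxE eq_sym ji mul0r.
Qed.

Lemma QN_mulmx (i : 'I_N.+1) :
  (QN R N *m v) i 0 = - N%:R * col_nat v i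
    + (if i : nat is j.+1 then (N - j)%:R * col_nat v j else 0)
    + i.+1%:R * col_nat v i.+1.
Proof.
rewrite mxE.
under eq_bigr => k _.
  have -> : QN R N i k * v k 0 =
      (if (k : nat) == i then - N%:R * col_nat v k else 0)
    + (if (k : nat).+1 == i then (N - k)%:R * col_nat v k else 0)
    + (if (k : nat) == i.+1 then k%:R * col_nat v k else 0).
    rewrite mxE col_nat_ord.
    case: (eqVneq (i : nat) k) => [->|_].
      by rewrite (gtn_eqF (ltnSn k)) (ltn_eqF (ltnSn k)) !addr0.
    case: (eqVneq (i : nat) k.+1) => [->|_].
      by rewrite (@ltn_eqF k k.+2) ?add0r ?addr0.
    by rewrite !add0r [_ == i.+1]eq_sym; case: ifP; rewrite ?mul0r.
  over.
rewrite !big_split /= -!big_mkcond.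
rewrite (big_ord1_eq _ (fun k => - N%:R * col_nat v k)) ltn_ord.
rewrite (big_ord1_eq _ (fun k => k%:R * col_nat v k)).
congr (_ + _ + _); last first.
  by case: ltnP => // iN; rewrite col_nat_out ?mulr0.
case: i => [[|j] ij] /=; first by rewrite big_pred0.
under eq_bigl do rewrite eqSS.
by rewrite (big_ord1_eq _ (fun k => (N - k)%:R * col_nat v k)) ltnW.
Qed.

End CrowKimuraMatrices.

Section ThreeTermRecurrence.
Variables (R : realFieldType) (N : nat) (u : R) (P : nat -> R).
Hypothesis N_gt0 : (0 < N)%N.
Hypothesis u_gt0 : 0 < u.
Hypothesis P_ge0 : forall k, 0 <= P k.
Hypothesis P_out : forall k, (N < k)%N -> P k = 0.
Hypothesis P1_le1 : P 1 <= 1.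
Hypothesis recur0 : N%:R * P 0 * (1 + u) = N%:R + u * P 1.
Hypothesis recurS : forall i, (i < N)%N ->
  N%:R * P i.+1 * (1 + u) = u * (N - i)%:R * P i + u * i.+2%:R * P i.+2.

Local Notation w := (1 + u).

Let N_gt0R : 0 < N%:R :> R. Proof. by rewrite ltr0n. Qed.
Let u_ge0 : 0 <= u. Proof. exact: ltW. Qed.
Let w_ge1 : 1 <= w. Proof. by rewrite lerDl. Qed.
Let w_ge0 : 0 <= w. Proof. exact: le_trans w_ge1. Qed.

Definition flux i := (N - i)%:R * P i - i.+1%:R * P i.+1.

Lemma flux_recur i : (i < N)%N -> u * flux i = N%:R * P i.+1 + u * flux i.+1.
Proof.
move=> iN; have := recurS iN.
have -> : (N%:R : R) = (N - i.+1)%:R + i.+1%:R by rewrite -natrD subnK.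
by rewrite /flux; lra.
Qed.

Lemma flux_ge0 i : (i <= N)%N -> 0 <= flux i.
Proof.
move=> iN; rewrite -(subKn iN); elim: (N - i)%N => [|d IHd].
  by rewrite subn0 /flux subnn mulr0n mul0r P_out // mulr0 subrr.
have [dN|Nd] := ltnP d N; last by rewrite (_ : N - d.+1 = N - d)%N //; lia.
have jN : (N - d.+1 < N)%N by lia.
have := flux_recur jN; rewrite (_ : (N - d.+1).+1 = N - d)%N; last by lia.
move=> flux_eq; rewrite -(pmulr_rge0 _ u_gt0) flux_eq.
by rewrite addr_ge0 ?mulr_ge0 ?ler0n.
Qed.

Lemma flux_le i : flux i <= N%:R * P i.
Proof.
have : (N - i)%:R * P i <= N%:R * P i by rewrite ler_wpM2r // ler_nat leq_subr.
have : 0 <= i.+1%:R * P i.+1 by rewrite mulr_ge0.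
by rewrite /flux; lra.
Qed.

Lemma P_succ_le i : P i.+1 <= u * P i.
Proof.
have [iN|Ni] := ltnP i N; last by rewrite P_out ?mulr_ge0.
rewrite -(ler_pM2l N_gt0R).
have := flux_recur iN.
have : u * flux i <= u * (N%:R * P i) by rewrite ler_wpM2l ?flux_le.
have : 0 <= u * flux i.+1 by rewrite mulr_ge0 ?flux_ge0.
lra.
Qed.

Lemma P_succ_le_expr k : P k.+1 <= u ^+ k.
Proof.
elim: k => [|k IHk]; first by rewrite expr0.
by rewrite exprS (le_trans (P_succ_le k.+1)) // ler_wpM2l.
Qed.

Lemma recur_lower k : (k < N)%N -> u * (N - k)%:R * P k <= N%:R * P k.+1 * w.
Proof.
move=> kN; rewrite recurS // lerDl.
by rewrite !mulr_ge0 ?ler0n.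
Qed.

Lemma recur_upper k : (k < N)%N ->
  N%:R * P k.+1 * w <= u * (N%:R * P k) + k.+2%:R * u ^+ k.+2.
Proof.
move=> kN; rewrite recurS // lerD //.
  by rewrite mulrA ler_wpM2r // ler_wpM2l // ler_nat leq_subr.
rewrite [leRHS](_ : _ = u * k.+2%:R * u ^+ k.+1); last by rewrite exprS; ring.
by rewrite ler_wpM2l ?mulr_ge0 ?ler0n ?P_succ_le_expr.
Qed.

Lemma P_lower_bound k : (k <= N)%N -> u ^+ k * (N ^_ k)%:R <= P k * w ^+ k.+1 * N%:R ^+ k.
Proof.
elim: k => [_|k IHk kN].
  rewrite expr0 mul1r ffactn0 expr1 expr0 mulr1 -(ler_pM2l N_gt0R) mulr1 mulrA recur0.
  by rewrite lerDl mulr_ge0.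
apply: (@le_trans _ _ ((u * (N - k)%:R) * (P k * w ^+ k.+1 * N%:R ^+ k))).
  rewrite ffactnSr natrM exprS.
  rewrite [leLHS](_ : _ = (u * (N - k)%:R) * (u ^+ k * (N ^_ k)%:R)); last by ring.
  by rewrite ler_wpM2l ?mulr_ge0 ?ler0n // IHk // ltnW.
rewrite [leLHS](_ : _ = (u * (N - k)%:R * P k) * (w ^+ k.+1 * N%:R ^+ k)); last by ring.
rewrite [leRHS](_ : _ = (N%:R * P k.+1 * w) * (w ^+ k.+1 * N%:R ^+ k)); last first.
  by rewrite !exprS; ring.
by rewrite ler_wpM2r ?mulr_ge0 ?exprn_ge0 ?ler0n ?recur_lower.
Qed.

Lemma P_upper_bound k : (k <= N)%N ->
  N%:R * P k * w ^+ k.+1 - N%:R * u ^+ k <= (u * w) ^+ k.+1 * k.+1%:R ^+ 2.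
Proof.
elim: k => [_|k IHk kN].
  rewrite expr1 recur0 expr0 mulr1 expr1n mulr1 addrC addKr.
  by rewrite ler_wpM2l // (le_trans P1_le1).
have step := ler_wpM2r (exprn_ge0 k.+1 w_ge0) (recur_upper kN).
have IH := ler_wpM2l u_ge0 (IHk (ltnW kN)).
set X := (u * w) ^+ k.+1 in IH *; set A : R := k.+1%:R in IH *.
have X_ge0 : 0 <= X by rewrite exprn_ge0 // mulr_ge0.
have A_ge0 : 0 <= A by rewrite ler0n.
have uwX_ge0 : 0 <= u * w * X by rewrite !mulr_ge0.
have uX : u ^+ k.+2 * w ^+ k.+1 <= u * w * X.
  by rewrite /X exprMn exprS -!mulrA ler_wpM2l // ler_peMl ?mulr_ge0 ?exprn_ge0.
have uX_A : (A + 1) * (u ^+ k.+2 * w ^+ k.+1) <= (A + 1) * (u * w * X).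
  by rewrite ler_wpM2l // addr_ge0.
have uXw_A : (u * X) * A ^+ 2 <= (u * w * X) * A ^+ 2.
  by rewrite ler_wpM2r ?exprn_ge0 // -mulrA ler_wpM2l // ler_peMl.
have sq : (u * w * X) * (A ^+ 2 + A + 1) <= (u * w * X) * (A + 1) ^+ 2.
  by rewrite ler_wpM2l //; nra.
rewrite -natr1 -/A in step *.
rewrite [(u * w) ^+ k.+2]exprS -/X [w ^+ k.+2]exprS [u ^+ k.+1]exprS.
lra.
Qed.

Let wX_gt0 k : 0 < w ^+ k. Proof. by rewrite exprn_gt0 // (lt_le_trans ltr01). Qed.

Lemma ffact_ratio_mul_le_P a : (a <= N)%N ->
  (N ^_ a)%:R / N%:R ^+ a * (u ^+ a / w ^+ a.+1) <= P a.
Proof.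
move=> aN; rewrite mulf_div ler_pdivrMr ?mulr_gt0 ?wX_gt0 ?exprn_gt0 //.
by rewrite mulrC (le_trans (P_lower_bound aN)) // [N%:R ^+ a * _]mulrC mulrA.
Qed.

Lemma P_sub_geometric_le a : (a <= N)%N ->
  P a - u ^+ a / w ^+ a.+1 <= u ^+ a.+1 * a.+1%:R ^+ 2 / N%:R.
Proof.
move=> aN; rewrite ler_pdivlMr // -(ler_pM2r (wX_gt0 a.+1)).
rewrite [leRHS](_ : _ = (u * w) ^+ a.+1 * a.+1%:R ^+ 2); last by rewrite exprMn; ring.
rewrite [leLHS](_ : _ = N%:R * P a * w ^+ a.+1 - N%:R * u ^+ a); last first.
  by field; rewrite gt_eqF.
exact: P_upper_bound.
Qed.

Lemma P_near_geometric a : (a <= N)%N ->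
  `|P a - u ^+ a / w ^+ a.+1|
    <= u ^+ a.+1 * a.+1%:R ^+ 2 / N%:R
       + (1 - (N ^_ a)%:R / N%:R ^+ a) * (u ^+ a / w ^+ a.+1).
Proof.
move=> aN; have lower := ffact_ratio_mul_le_P aN; have upper := P_sub_geometric_le aN.
set q := u ^+ a / w ^+ a.+1 in lower upper *.
set c := (N ^_ a)%:R / N%:R ^+ a in lower *.
have q_ge0 : 0 <= q by rewrite divr_ge0 ?exprn_ge0 // ltW.
have c_le1 : c <= 1.
  by rewrite ler_pdivrMr ?exprn_gt0 // mul1r -natrX ler_nat ffact_le_expn.
have e_ge0 : 0 <= u ^+ a.+1 * a.+1%:R ^+ 2 / N%:R.
  by rewrite divr_ge0 ?mulr_ge0 ?exprn_ge0 ?ler0n.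
have cq : c * q <= q by rewrite ler_piMl.
rewrite ler_norml; apply/andP; split; lra.
Qed.

End ThreeTermRecurrence.

Section EigenvectorRecurrence.
Variables (R : realFieldType) (N : nat) (mu mbar : R) (v : 'cV[R]_N.+1).
Hypothesis eigen : (fitmx R N + mu *: QN R N) *m v = mbar *: v.
Hypothesis mbarE : mbar = N%:R * col_nat v 0.
Hypothesis v0_neq0 : col_nat v 0 != 0.

Local Notation x := (col_nat v).
Local Notation u := (mu / col_nat v 0).

Lemma eigen_row k : (k <= N)%N ->
  (if k == 0%N then N%:R else 0) * x k
    + mu * (- N%:R * x k + (if k is j.+1 then (N - j)%:R * x j else 0)
            + k.+1%:R * x k.+1) = mbar * x k.
Proof.
move=> kN; have := congr1 (fun M : 'cV[R]_N.+1 => M (inord k) 0) eigen.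
rewrite mulmxDl -scalemxAl {1}mxE fitmx_mulmx [X in _ + X]mxE QN_mulmx.
by rewrite [X in _ = X]mxE mxE -!col_nat_ord inordK.
Qed.

Let muE : mu = u * x 0. Proof. by rewrite divfK. Qed.

Lemma eigen_recur0 : N%:R * x 0 * (1 + u) = N%:R + u * x 1.
Proof.
apply: (mulIf v0_neq0); have := eigen_row (leq0n N).
by rewrite /= mbarE [in X in X -> _]muE; lra.
Qed.

Lemma eigen_recurS i : (i < N)%N ->
  N%:R * x i.+1 * (1 + u) = u * (N - i)%:R * x i + u * i.+2%:R * x i.+2.
Proof.
move=> iN; apply: (mulIf v0_neq0); have := eigen_row iN.
by rewrite /= mbarE [in X in X -> _]muE; lra.
Qed.

End EigenvectorRecurrence.

Lemma sqr_div_le_exp2_div_sqrt (R : rcfType) (x : R) (a N : nat) :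
  0 <= x -> (0 < N)%N ->
  x * a.+1%:R ^+ 2 / N%:R <= x * 2 ^+ a * a.+1%:R / Num.sqrt N%:R.
Proof.
move=> x_ge0 N_gt0; set s := Num.sqrt _.
have s_ge1 : 1 <= s by rewrite -sqrtr1 ler_sqrt ?ler1n.
have s_gt0 : 0 < s by apply: lt_le_trans s_ge1.
have N_sqr : N%:R = s ^+ 2 by rewrite sqr_sqrtr ?ler0n.
have a_le_exp2 : a.+1%:R <= 2 ^+ a :> R by rewrite -natrX ler_nat ltn_expl.
rewrite N_sqr [leLHS](_ : _ = x * a.+1%:R / s * (a.+1%:R / s)); last first.
  by field; rewrite gt_eqF.
rewrite [leRHS](_ : _ = x * a.+1%:R / s * 2 ^+ a); last by ring.
apply: ler_wpM2l; first by rewrite divr_ge0 ?mulr_ge0 ?ler0n ?sqrtr_ge0.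
by rewrite (le_trans _ a_le_exp2) // ler_pdivrMr // ler_peMr ?ler0n.
Qed.

Theorem lemma1 (R : realType) (N : nat) (hN : (1 <= N)%N) (mu : R) (hmu : 0 < mu)
  (p : 'cV[R]_(N.+1)) (mbar : R) :
  (forall i, 0 < p i 0) ->
  \sum_(i < N.+1) p i 0 = 1 ->
  mbar = \sum_(i < N.+1) fitvec R N i 0 * p i 0 ->
  (fitmx R N + mu *: QN R N) *m p = mbar *: p ->
  let rbar := mbar / N%:R in
  let u := mu / rbar in
  forall a : 'I_N.+1, (1 <= a)%N ->
    `| p a 0 - u ^+ a / (1 + u) ^+ a.+1 |
      <= u ^+ a.+1 * 2 ^+ a * a.+1%:R / Num.sqrt (N%:R)
         + (1 - ('C(N, a) * a`!)%:R / N%:R ^+ a) * (u ^+ a / (1 + u) ^+ a.+1).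
Proof.
move=> p_gt0 p_sum mbarE eigen rbar u a _.
set P := col_nat p.
have P_gt0 k : (k <= N)%N -> 0 < P k by move=> kN; rewrite /P /col_nat ltnS kN.
have P_ge0 k : 0 <= P k.
  by case: (leqP k N) => [/P_gt0/ltW // | Nk]; rewrite /P col_nat_out.
have P_out k : (N < k)%N -> P k = 0 by apply: col_nat_out.
have P1_le1 : P 1 <= 1.
  rewrite -p_sum (bigD1 (inord 1)) //= -col_nat_ord inordK ?ltnS // lerDl.
  by rewrite sumr_ge0 // => i _; apply: ltW.
have P0_neq0 : P 0 != 0 by rewrite gt_eqF ?P_gt0.
rewrite fitvec_dot in mbarE.
have -> : u = mu / P 0.
  by rewrite /u /rbar mbarE [N%:R * _ / _]mulrAC divff ?mul1r // pnatr_eq0 -lt0n.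
have u_gt0 : 0 < mu / P 0 by rewrite divr_gt0 ?P_gt0.
rewrite -col_nat_ord -/P bin_ffact.
apply: le_trans (P_near_geometric hN u_gt0 P_ge0 P_out P1_le1
  (eigen_recur0 eigen mbarE P0_neq0) (eigen_recurS eigen mbarE P0_neq0) _) _.
  by rewrite -ltnS.
by rewrite lerD2r sqr_div_le_exp2_div_sqrt // exprn_ge0 // ltW.
Qed.
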